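(* Let $q$ be a prime power, $n\geq 1$, and $c\in\mathbb{F}_q\setminus\{1\}$. Let $f_1,\ldots,f_n:\mathbb{F}_q\to\mathbb{F}_q$ be perfect $c$-nonlinear functions. Let $\{\beta_1,\ldots,\beta_n\}$ be a basis of $\mathbb{F}_{q^n}$ over $\mathbb{F}_q$, let $A$ be the $n\times n$ matrix with $(i,j)$ entry $\beta_i^{q^{j-1}}$, write $A^{-1}=(a_{i,j})_{i,j}$, and for $1\leq k\leq n$ let $L_k(x)=\sum_{i=1}^n a_{i,k}x^{q^{i-1}}$. Then $F:\mathbb{F}_{q^n}\to\mathbb{F}_{q^n}$, $F(x)=\sum_{k=1}^n\beta_k f_k(L_k(x))$, is perfect $c$-nonlinear.
   Context: For a finite field $K$, a function $h:K\to K$ and $c\in K$, let ${}_c\Delta_h(a,b)=\#\{x\in K: h(x+a)-ch(x)=b\}$ and the $c$-differential uniformity is $\delta_{h,c}=\max\{{}_c\Delta_h(a,b): a,b\in K,\ a\neq 0\text{ if } c=1\}$. $h$ is perfect $c$-nonlinear (PcN) if $\delta_{h,c}=1$. *)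

From HB Require Import structures.
From mathcomp Require Import all_boot all_order all_algebra all_fingroup all_field.
Set Implicit Arguments. Unset Strict Implicit. Unset Printing Implicit Defensive.
Import GRing.Theory.
Local Open Scope ring_scope.

Definition cDelta (T : finFieldType) (h : T -> T) (c a b : T) : nat :=
  #|[set x : T | h (x + a) - c * h x == b]|.

Definition cdiff_unif (T : finFieldType) (h : T -> T) (c : T) : nat :=
  \max_(ab : T * T | (c != 1) || (ab.1 != 0)) cDelta h c ab.1 ab.2.

Definition PcN (T : finFieldType) (h : T -> T) (c : T) : Prop :=
  cdiff_unif h c = 1%N.

(* The identification of F_q (= K) with its image K%:A inside the extension:
   toK y is the unique z in K with z%:A = y when y lies in the image of K
   (and 0 otherwise). *)
Definition toK (K : finFieldType) (L : fieldExtType K) (y : L) : K :=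
  odflt 0 [pick z : K | z%:A == y].

From HB Require Import structures.
From mathcomp Require Import all_boot all_order all_algebra all_fingroup all_field.
(* The Moore matrix A of a basis is invertible: otherwise some nonzero
   q-polynomial sum_(j < n) v_j X^(q^j), of degree below q^n = #|F_(q^n)|,
   would vanish on the whole field.  As x |-> x^(q^j) is F_q-linear, the row
   (x^(q^j))_j is the coordinate row of x times A, so L_k(x) is the k-th
   coordinate x_k of x and F(x) = sum_k f_k(x_k) beta_k acts coordinatewise.
   The equation F(x + a) - c F(x) = b thus splits into the n equations
   f_k(x_k + a_k) - c f_k(x_k) = b_k, each having at most one solution. *)

Set Implicit Arguments.
Unset Strict Implicit.
Unset Printing Implicit Defensive.

Import GRing.Theory.
Local Open Scope ring_scope.

Section PerfectNonlinearity.
Variable T : finFieldType.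
Implicit Types (h : T -> T) (c : T).

Lemma eq_PcN h1 h2 c : h1 =1 h2 -> PcN h1 c -> PcN h2 c.
Proof.
move=> eq_h; rewrite /PcN /cdiff_unif => <-; apply: eq_bigr => ab _.
by apply: eq_card => x; rewrite !inE !eq_h.
Qed.

Lemma PcNP h c : c != 1 -> PcN h c <-> forall a b, (cDelta h c a b <= 1)%N.
Proof.
move=> c_neq1; rewrite /PcN /cdiff_unif; split=> [<- a b | le1].
  by apply: (leq_bigmax_cond (a, b)); rewrite c_neq1.
apply/eqP; rewrite eqn_leq; apply/andP; split.
  by apply/bigmax_leqP => ab _; apply: le1.
apply: leq_trans (leq_bigmax_cond (0, h (0 + 0) - c * h 0) _); last by rewrite c_neq1.
by rewrite card_gt0; apply/set0Pn; exists 0; rewrite inE.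
Qed.

End PerfectNonlinearity.

Lemma toK_alg (K : finFieldType) (L : fieldExtType K) (z : K) :
  toK (z%:A : L) = z.
Proof.
rewrite /toK; case: pickP => [w /eqP | /(_ z)]; last by rewrite eqxx.
by rewrite -!in_algE => /fmorph_inj.
Qed.

Section FiniteExtension.
Variables (K : finFieldType) (L0 : fieldExtType K).
Local Notation L := (finvect_type L0).
Local Notation q := #|K|.

Lemma expqD j (x y : L) : (x + y) ^+ (q ^ j) = x ^+ (q ^ j) + y ^+ (q ^ j).
Proof.
have [p p_pr pK] := finPcharP K.
apply: exprDn_pchar; rewrite (card_pprimeChar pK) -expnM pnatX pnatE //.
by rewrite (pchar_lalg L0) pK.
Qed.

Lemma expq_alg j (z : K) : (z%:A : L) ^+ (q ^ j) = z%:A.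
Proof.
elim: j => [|j IHj]; first by rewrite expn0 expr1.
by rewrite expnSr exprM IHj -in_algE -rmorphXn expf_card.
Qed.

Lemma expq_sumZ j n (k : 'I_n -> K) (x : 'I_n -> L) :
  (\sum_i k i *: x i) ^+ (q ^ j) = \sum_i k i *: x i ^+ (q ^ j).
Proof.
elim/big_rec2: _ => [|i y z _ <-].
  by rewrite expr0n expn_eq0 eqn0Ngt (ltnW (finNzRing_gt1 K)).
by rewrite expqD -mulr_algl exprMn expq_alg mulr_algl.
Qed.

Lemma linearized_poly_eq0 n (v : 'I_n -> L) :
    (n <= \dim {:L})%N -> (forall x : L, \sum_j v j * x ^+ (q ^ j) = 0) ->
  forall j, v j = 0.
Proof.
move=> le_n_dim vanish i.
have q_gt1 := finNzRing_gt1 K.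
pose P : {poly L} := \sum_j v j *: 'X^(q ^ j).
have coefP : P`_(q ^ i) = v i.
  rewrite coef_sum (bigD1 i) //= coefZ coefXn eqxx mulr1 big1 ?addr0 // => k k_neq_i.
  rewrite coefZ coefXn eqn_exp2l //.
  by case: eqP => [/val_inj ik | _]; [rewrite ik eqxx in k_neq_i | rewrite mulr0].
suff P0 : P = 0 by rewrite -coefP P0 coef0.
apply: (@roots_geq_poly_eq0 _ _ (enum L)); last 2 first.
- exact: enum_uniq.
- have size_P : (size P <= q ^ n)%N.
    apply: (big_ind (fun p : {poly L} => size p <= q ^ n)%N) => [|p r le_p le_r|k _].
    + by rewrite size_poly0.
    + by rewrite (leq_trans (size_polyD _ _)) // geq_max le_p le_r.
    + by rewrite (leq_trans (size_scale_leq _ _)) // size_polyXn ltn_exp2l.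
  have card_L : #|L| = (q ^ \dim {:L})%N.
    by rewrite -card_vspace; apply: eq_card => x; rewrite memvf.
  by rewrite (leq_trans size_P) // -cardE card_L leq_exp2l.
apply/allP => x _; apply/rootP; rewrite horner_sum -[RHS](vanish x).
by apply: eq_bigr => j _; rewrite hornerZ hornerXn.
Qed.

Definition moore_mx n (beta : n.-tuple L) : 'M[L]_n :=
  \matrix_(i, j) tnth beta i ^+ (q ^ j).

Definition coordwise_map n (beta : n.-tuple L) (f : 'I_n -> K -> K) (x : L) :=
  \sum_k f k (coord beta k x) *: beta`_k.

Section Basis.
Variables (n : nat) (beta : n.-tuple L).
Hypothesis beta_basis : basis_of fullv beta.

Lemma moore_row x :
  \row_j x ^+ (q ^ j) = \row_i (coord beta i x)%:A *m moore_mx beta.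
Proof.
apply/rowP => j; rewrite !mxE {1}(coord_basis beta_basis (memvf x)) expq_sumZ.
by apply: eq_bigr => i _; rewrite !mxE mulr_algl (tnth_nth 0).
Qed.

Lemma moore_mx_unit : moore_mx beta \in unitmx.
Proof.
rewrite unitmxE unitfE -det_tr; apply/negP => /det0P [v v_neq0 vAt0].
case/eqP: v_neq0; apply/rowP => j; rewrite mxE.
apply: (@linearized_poly_eq0 _ (v 0)) => [|x].
  by rewrite -(size_basis beta_basis).
transitivity ((v *m (\row_j x ^+ (q ^ j))^T) 0 0).
  by rewrite mxE; apply: eq_bigr => i _; rewrite !mxE.
by rewrite moore_row trmx_mul mulmxA vAt0 mul0mx mxE.
Qed.

Lemma moore_coord x :
  \row_j x ^+ (q ^ j) *m invmx (moore_mx beta) = \row_i (coord beta i x)%:A.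
Proof. by rewrite moore_row mulmxK ?moore_mx_unit. Qed.

Variable f : 'I_n -> K -> K.

Lemma coord_coordwise_map k x :
  coord beta k (coordwise_map beta f x) = f k (coord beta k x).
Proof. by rewrite coord_sum_free // (basis_free beta_basis). Qed.

Lemma coord_cdiff_coordwise_map (c : K) k x a :
  coord beta k (coordwise_map beta f (x + a) - c%:A * coordwise_map beta f x)
    = f k (coord beta k x + coord beta k a) - c * f k (coord beta k x).
Proof.
by rewrite linearB /= mulr_algl linearZ /= !coord_coordwise_map linearD.
Qed.

Lemma PcN_coordwise_map (c : K) :
  c != 1 -> (forall k, PcN (f k) c) -> PcN (coordwise_map beta f) c%:A.
Proof.
move=> c_neq1 PcN_f.
have cA_neq1 : c%:A != 1 :> L by rewrite -in_algE fmorph_eq1.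
apply/(PcNP _ cA_neq1) => a b; apply/card_le1_eqP => x y.
rewrite !inE => /eqP Dx /eqP Dy.
rewrite (coord_basis beta_basis (memvf x)) (coord_basis beta_basis (memvf y)).
apply: eq_bigr => k _; congr (_ *: _).
have /card_le1_eqP := (PcNP _ c_neq1).1 (PcN_f k) (coord beta k a) (coord beta k b).
by apply; rewrite inE -coord_cdiff_coordwise_map ?Dx ?Dy.
Qed.

End Basis.

End FiniteExtension.

Theorem corollary3p2 (K : finFieldType) (L0 : fieldExtType K) (n : nat)
  (hn : (1 <= n)%N) (c : K) (hc : c != 1)
  (f : 'I_n -> K -> K) (hf : forall k, PcN (f k) c)
  (beta : n.-tuple (finvect_type L0))
  (hbasis : basis_of fullv beta) :
  let q := #|K| in
  let A : 'M[finvect_type L0]_n := \matrix_(i < n, j < n) (tnth beta i) ^+ (q ^ j) in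
  let a := invmx A in
  let Lk (k : 'I_n) (x : finvect_type L0) := \sum_(i < n) a i k * x ^+ (q ^ i) in
  let F (x : finvect_type L0) := \sum_(k < n) tnth beta k * (f k (toK (Lk k x)))%:A in
  PcN F c%:A.
Proof.
move=> q A a Lk F.
have Lk_coord k x : Lk k x = (coord beta k x)%:A.
  have := congr1 (fun r : 'rV_n => r 0 k) (moore_coord hbasis x).
  by rewrite !mxE => <-; apply: eq_bigr => i _; rewrite mxE mulrC.
have F_coordwise x : coordwise_map beta f x = F x.
  by apply: eq_bigr => k _; rewrite Lk_coord toK_alg mulr_algr (tnth_nth 0).
exact: eq_PcN F_coordwise (PcN_coordwise_map hbasis hc hf).
Qed.
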